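(* Let $G$ be a grid-labelled graph of type $(3,3)$ all of whose edges are diagonal. Then $G$ satisfies the degree criterion if and only if $E(G)$ can be partitioned into edge sets of subgraphs $X_1,\dots,X_n$ each of which is locally isomorphic to a rotation of one of the building blocks $B_2,B_3,B_4,B_5$.
   Context: A grid-labelled graph of type $(a,b)$ is a simple graph whose vertex set is the grid $[a]\times[b]$. An edge $\{(i,j),(k,l)\}$ is diagonal if $i\neq k$ and $j\neq l$. The partial transpose $\Gamma(G)$ is the grid-labelled graph with edge set $\{\{(k,j),(i,l)\}:\{(i,j),(k,l)\}\in E(G)\}$; $G$ satisfies the degree criterion if every vertex has the same degree in $G$ and in $\Gamma(G)$. Two grid-labelled graphs $G,H$ of type $(a,b)$ are locally isomorphic if there are permutations $\pi$ of $[a]$ and $\sigma$ of $[b]$ with $\{(i,j),(k,l)\}\in E(G)\iff\{(\pi(i),\sigma(j)),(\pi(k),\sigma(l))\}\in E(H)$. A rotation of a type $(3,3)$ graph is its image under a power (including the identity) of the map $(i,j)\mapsto(j,4-i)$ on vertices. Building blocks (type $(3,3)$): $B_2$ with edges $\{(1,1),(2,2)\},\{(1,2),(2,1)\}$; $B_3$ with edges $\{(1,1),(2,2)\},\{(1,2),(2,3)\},\{(2,1),(1,3)\}$; $B_4$ with edges $\{(1,1),(2,3)\},\{(2,1),(3,3)\},\{(1,2),(3,1)\},\{(1,3),(3,2)\}$; $B_5$ with edges $\{(1,1),(3,3)\},\{(1,2),(2,1)\},\{(1,3),(2,2)\},\{(2,2),(3,1)\},\{(2,3),(3,2)\}$.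 *)

(* Vertices of the 3x3 grid are 'I_3 * 'I_3 (0-indexed:
   paper's (i,j) is our (i-1, j-1)). A grid-labelled graph is a set of
   edges, each edge a 2-element vertex set. *)
From HB Require Import structures.
From mathcomp Require Import all_boot all_order all_fingroup.
Set Implicit Arguments. Unset Strict Implicit. Unset Printing Implicit Defensive.

Definition V := ('I_3 * 'I_3)%type.
Definition graph := {set {set V}}.

Definition simple_graph (G : graph) : Prop := forall e, e \in G -> #|e| = 2.

Definition diag_pair (u v : V) : bool := (u.1 != v.1) && (u.2 != v.2).

Definition all_diagonal (G : graph) : Prop :=
  forall e, e \in G -> exists u v, e = [set u; v] /\ diag_pair u v.

(* partial transpose: {(i,j),(k,l)} |-> {(k,j),(i,l)} *)
Definition ptrans (G : graph) : graph :=
  [set [set (p.2.1, p.1.2); (p.1.1, p.2.2)]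
    | p in [set p : V * V | [set p.1; p.2] \in G]].

Definition deg (G : graph) (u : V) : nat := #|[set v : V | [set u; v] \in G]|.

Definition degree_criterion (G : graph) : Prop :=
  forall u : V, deg G u = deg (ptrans G) u.

Definition loc_map (p s : {perm 'I_3}) (u : V) : V := (p u.1, s u.2).

Definition locally_iso (G H : graph) : Prop :=
  exists (p s : {perm 'I_3}), forall u v : V,
    ([set u; v] \in G) = ([set loc_map p s u; loc_map p s v] \in H).

Definition gmap (f : V -> V) (G : graph) : graph := [set (f @: e) | e : {set V} in G].

(* (i,j) |-> (j, 4-i) in 1-indexed coordinates, i.e. (i,j) |-> (j, 2-i) *)
Definition rot (u : V) : V := (u.2, rev_ord u.1).

Definition rotation (k : nat) (G : graph) : graph := gmap (iter k rot) G.

Definition vx (i j : nat) : V := (inord i, inord j).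
Definition ed (i j k l : nat) : {set V} := [set vx i j; vx k l].

Definition B2 : graph := [set ed 0 0 1 1; ed 0 1 1 0].
Definition B3 : graph := [set ed 0 0 1 1; ed 0 1 1 2; ed 1 0 0 2].
Definition B4 : graph := [set ed 0 0 1 2; ed 1 0 2 2; ed 0 1 2 0; ed 0 2 2 1].
Definition B5 : graph :=
  [set ed 0 0 2 2; ed 0 1 1 0; ed 0 2 1 1; ed 1 1 2 0; ed 1 2 2 1].

Definition is_block (B : graph) : Prop :=
  B = B2 \/ B = B3 \/ B = B4 \/ B = B5.

Definition good_piece (X : graph) : Prop :=
  exists B k, is_block B /\ locally_iso X (rotation k B).

From Pilot Require Import Defs.
From mathcomp Require Import all_boot all_order all_fingroup.
Set Implicit Arguments. Unset Strict Implicit. Unset Printing Implicit Defensive.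

(* For a diagonal graph the degree criterion says that, at every vertex u, the edges
   {u, v} of G and the edges Γ{u, v} of G are equally many.  This balance condition is
   additive over edge-disjoint unions, and it holds for every good piece: the four
   building blocks satisfy it by direct count, and local isomorphisms and rotations
   commute with the partial transpose, so it transfers along them.
   Conversely, a diagonal graph is a subset of the 18 diagonal edges of the grid, and the
   balance condition is a condition on its 18-bit edge mask.  Running over all 2^18 masks,
   a backtracking search splits every balanced mask into masks of good pieces (57 distinct
   ones), and the resulting certificates are checked by reflection. *)

Lemma set2_eqE (x y a b : V) : a != b ->
  ([set x; y] == [set a; b]) = ((x, y) == (a, b)) || ((x, y) == (b, a)).
Proof.
move=> nab; apply/idP/idP => [|/orP[]/eqP[-> ->]]; last 2 first.
- by [].
- by rewrite setUC.
rewrite eqEsubset !subUset !sub1set !inE => /andP[/andP[xab yab] /andP[axy bxy]].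
case/orP: xab => /eqP xE; subst x.
- by case/orP: bxy => /eqP bE; [rewrite bE eqxx in nab | rewrite bE eqxx].
- by case/orP: axy => /eqP aE; [rewrite aE eqxx in nab | rewrite aE eqxx orbT].
Qed.

Lemma imset_set2 (f : V -> V) (a b : V) : f @: [set a; b] = [set f a; f b].
Proof. by rewrite imsetU1 imset_set1. Qed.

Lemma diag_pairC (u v : V) : diag_pair u v = diag_pair v u.
Proof. by rewrite /diag_pair eq_sym (eq_sym u.2). Qed.

Lemma diag_pair_neq (u v : V) : diag_pair u v -> u != v.
Proof. by case/andP=> + _; apply: contraNneq => ->. Qed.

Lemma mem_all_diagonal (G : graph) (u v : V) :
  all_diagonal G -> [set u; v] \in G -> diag_pair u v.
Proof.
move=> diagG /diagG [a [b [/eqP uvE abD]]]; move: uvE.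
by rewrite set2_eqE ?diag_pair_neq // => /orP[]/eqP[-> ->]; rewrite // diag_pairC.
Qed.

Definition ptrans_edge (u v : V) : {set V} := [set (v.1, u.2); (u.1, v.2)].

Lemma mem_ptrans (G : graph) (u v : V) :
  all_diagonal G -> ([set u; v] \in ptrans G) = (ptrans_edge u v \in G).
Proof.
move=> diagG; apply/imsetP/idP => [[[a b]]|uvG]; last first.
  by exists ((v.1, u.2), (u.1, v.2)); rewrite ?inE //= -!surjective_pairing.
rewrite inE /= => abG /eqP; have abD := mem_all_diagonal diagG abG.
have neq : (b.1, a.2) != (a.1, b.2) by case/andP: abD => + _; apply: contraNneq => -[->].
rewrite set2_eqE // => /orP[]/eqP[-> ->]; rewrite /ptrans_edge /= -!surjective_pairing //.
by rewrite setUC.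
Qed.

(** * The degree criterion as a balance condition *)

Definition degree_balanced (H : graph) : Prop := forall u : V,
  \sum_(v : V) ([set u; v] \in H : nat) = \sum_(v : V) (ptrans_edge u v \in H : nat).

Lemma card_set_sum (P : pred V) : #|[set v | P v]| = \sum_(v : V) (P v : nat).
Proof. by rewrite -sum1dep_card big_mkcond; apply: eq_bigr => v _; case: (P v). Qed.

Lemma degree_criterion_balanced (G : graph) :
  all_diagonal G -> degree_criterion G <-> degree_balanced G.
Proof.
move=> diagG; have degT u : deg (ptrans G) u = \sum_(v : V) (ptrans_edge u v \in G : nat).
  by rewrite /deg card_set_sum; apply: eq_bigr => v _; rewrite mem_ptrans.
by split=> crit u; move: (crit u); rewrite degT /deg card_set_sum.
Qed.

Definition exact_cover (G : graph) (n : nat) (X : 'I_n -> graph) : Prop :=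
  forall e, (e \in G : nat) = \sum_(i < n) (e \in X i : nat).

Lemma exact_coverP (G : graph) (n : nat) (X : 'I_n -> graph) :
  exact_cover G X <->
  (forall i j, i != j -> [disjoint X i & X j]) /\ \bigcup_(i < n) X i = G.
Proof.
split=> [cover | [disjX <-] e]; first split.
- move=> i j ij; rewrite -setI_eq0; apply/eqP/setP => e; rewrite !inE.
  apply/negbTE/andP => -[ei ej]; move: (cover e).
  rewrite (bigD1 i) //= (bigD1 j) 1?eq_sym //= ei ej.
  by case: (e \in G).
- apply/setP => e; apply/bigcupP/idP => [[i _ ei] | eG].
    by move: (cover e); rewrite (bigD1 i) //= ei; case: (e \in G).
  case: (pickP (fun i => e \in X i)) => [i ei | notX]; first by exists i.
  by move: (cover e); rewrite eG big1 // => i _; rewrite notX.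
- case: (boolP (e \in _)) => [/bigcupP[i _ ei] | notU].
  + rewrite (bigD1 i) //= ei big1 // => j ji.
    by rewrite (disjointFl (disjX j i ji) ei).
  + rewrite big1 // => i _; apply/eqP; rewrite eqb0.
    by apply: contra notU => ei; apply/bigcupP; exists i.
Qed.

Lemma balanced_exact_cover (G : graph) (n : nat) (X : 'I_n -> graph) :
  exact_cover G X -> (forall i, degree_balanced (X i)) -> degree_balanced G.
Proof.
move=> cover balX u.
under eq_bigr do rewrite cover; under [RHS]eq_bigr do rewrite cover.
by rewrite exchange_big [RHS]exchange_big; apply: eq_bigr => i _; apply: balX.
Qed.

(** * Good pieces are balanced *)

Definition ptrans_compatible (f : V -> V) : Prop :=
  forall u v, ptrans_edge (f u) (f v) = f @: ptrans_edge u v.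

Lemma balanced_pullback (f : V -> V) (X H : graph) :
  injective f -> ptrans_compatible f ->
  (forall u v, ([set u; v] \in X) = ([set f u; f v] \in H)) ->
  degree_balanced H -> degree_balanced X.
Proof.
move=> f_inj f_compat memX balH u.
under eq_bigr do rewrite memX; under [RHS]eq_bigr do rewrite memX -imset_set2 -f_compat.
have reindex (F : V -> nat) : \sum_(v : V) F (f v) = \sum_(w : V) F w.
  by rewrite [RHS](reindex_inj f_inj).
by rewrite (reindex (fun w => [set f u; w] \in H : nat)) balH
  (reindex (fun w => ptrans_edge (f u) w \in H : nat)).
Qed.

Lemma loc_map_compatible (p s : {perm 'I_3}) : ptrans_compatible (loc_map p s).
Proof. by move=> u v; rewrite imset_set2. Qed.

Definition unrot (w : V) : V := (rev_ord w.2, w.1).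

Lemma unrot_compatible : ptrans_compatible unrot.
Proof. by move=> u v; rewrite imset_set2 setUC. Qed.

Lemma comp_compatible (f g : V -> V) :
  ptrans_compatible f -> ptrans_compatible g -> ptrans_compatible (g \o f).
Proof. by move=> f_compat g_compat u v; rewrite imset_comp -f_compat -g_compat. Qed.

Lemma iter_compatible (k : nat) (f : V -> V) :
  ptrans_compatible f -> ptrans_compatible (iter k f).
Proof.
move=> f_compat; elim: k => [u v | k IH]; first by rewrite imset_id.
exact: comp_compatible IH f_compat.
Qed.

Lemma iter_can (T : Type) (f g : T -> T) (k : nat) : cancel f g -> cancel (iter k f) (iter k g).
Proof. by move=> fK x; elim: k x => // k IH x; rewrite [iter k.+1 f x]iterS iterSr fK IH. Qed.

Lemma rotK : cancel Defs.rot unrot.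
Proof. by case=> a b; rewrite /unrot /Defs.rot /= rev_ordK. Qed.

Lemma unrotK : cancel unrot Defs.rot.
Proof. by case=> a b; rewrite /unrot /Defs.rot /= rev_ordK. Qed.

Lemma mem_rotation (k : nat) (B : graph) (x y : V) :
  ([set x; y] \in rotation k B) = ([set iter k unrot x; iter k unrot y] \in B).
Proof.
have fK := iter_can k rotK; have gK := iter_can k unrotK.
apply/imsetP/idP => [[e eB xyE] | xyB].
  by rewrite -imset_set2 xyE -imset_comp (eq_imset _ fK) imset_id.
by exists [set iter k unrot x; iter k unrot y]; rewrite // imset_set2 !gK.
Qed.

(* [enum] and [inord] on ordinals go through [insub], which is stuck on the opaque [idP]
   under [vm_compute]; hence the explicit vertex list and the computable copies of the
   blocks ([vtx], [block_edges]) and of the permutations ([fun_of_seq]) below. *)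
Definition ord_mod3 (i : nat) : 'I_3 := Ordinal (ltn_pmod i (isT : 0 < 3)).
Definition ord3 : seq 'I_3 := [seq ord_mod3 i | i <- iota 0 3].
Definition vertices : seq V := [seq (i, j) | i <- ord3, j <- ord3].
Arguments vertices : simpl never.

Lemma mem_vertices (u : V) : u \in vertices.
Proof.
have ord3P (i : 'I_3) : i \in ord3.
  apply/mapP; exists (val i); first by rewrite mem_iota /=.
  by apply: val_inj; rewrite /= modn_small.
by case: u => i j; apply: allpairs_f.
Qed.

Lemma sum_vertices (P : pred V) : \sum_(v : V) (P v : nat) = count P vertices.
Proof.
have enumV : perm_eq (index_enum V) vertices.
  apply: uniq_perm; rewrite ?index_enum_uniq //= => u.
  by rewrite mem_index_enum mem_vertices.
rewrite (perm_big _ enumV).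
by elim: vertices => [|v s IH]; rewrite ?big_nil // big_cons IH.
Qed.

Definition block (n : nat) : graph := nth B5 [:: B2; B3; B4] n.

Lemma is_blockP (B : graph) : is_block B <-> exists n, B = block n.
Proof.
split=> [|[n ->]]; last by case: n => [|[|[|n]]]; rewrite /is_block /block /= ?nth_nil; intuition.
by case=> [->|[->|[->|->]]]; [exists 0 | exists 1 | exists 2 | exists 3].
Qed.

Definition vtx (i j : nat) : V := (ord_mod3 i, ord_mod3 j).

Definition block_edges (n : nat) : seq (V * V) :=
  nth [:: (vtx 0 0, vtx 2 2); (vtx 0 1, vtx 1 0); (vtx 0 2, vtx 1 1); (vtx 1 1, vtx 2 0);
          (vtx 1 2, vtx 2 1)]
    [:: [:: (vtx 0 0, vtx 1 1); (vtx 0 1, vtx 1 0)];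
        [:: (vtx 0 0, vtx 1 1); (vtx 0 1, vtx 1 2); (vtx 1 0, vtx 0 2)];
        [:: (vtx 0 0, vtx 1 2); (vtx 1 0, vtx 2 2); (vtx 0 1, vtx 2 0); (vtx 0 2, vtx 2 1)]] n.

Definition block_adj (n : nat) (x y : V) : bool :=
  has (fun e => ((x, y) == e) || ((x, y) == (e.2, e.1))) (block_edges n).

Lemma mem_block (n : nat) (x y : V) : ([set x; y] \in block n) = block_adj n x y.
Proof.
have vxE i j : i < 3 -> j < 3 -> vx i j = vtx i j.
  by move=> i3 j3; congr pair; apply: val_inj; rewrite /= inordK // modn_small.
by case: n => [|[|[|n]]]; rewrite /block /block_adj /block_edges /= ?nth_nil
  /B2 /B3 /B4 /B5 /ed !vxE // !inE !set2_eqE //= ?orbF ?orbA.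
Qed.

Lemma block_balanced (n : nat) : degree_balanced (block n).
Proof.
wlog n_lt4 : n / n < 4.
  move=> small; have [/small // | n_ge4] := ltnP n 4.
  by rewrite /block nth_default ?(ltnW n_ge4) //; exact: (small 3).
have blocks_balanced : all (fun n => all (fun u => count (block_adj n u) vertices ==
    count (fun v => block_adj n (v.1, u.2) (u.1, v.2)) vertices) vertices) (iota 0 4).
  by vm_compute.
move=> u; rewrite !sum_vertices (eq_count (mem_block n u)) (eq_count (fun v => mem_block n _ _)).
apply/eqP; move/allP: blocks_balanced => /(_ n); rewrite mem_iota n_lt4 => /(_ isT).
by move/allP/(_ u (mem_vertices u)).
Qed.

Lemma good_piece_balanced (X : graph) : good_piece X -> degree_balanced X.
Proof.
case=> B [k [/is_blockP[n ->] [p [s isoX]]]].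
apply: (@balanced_pullback (iter k unrot \o loc_map p s) _ (block n)); last exact: block_balanced.
- apply: inj_comp; first exact: can_inj (iter_can k unrotK).
  by move=> [a b] [c d] [/perm_inj -> /perm_inj ->].
- exact: comp_compatible (loc_map_compatible p s) (iter_compatible k unrot_compatible).
- by move=> u v; rewrite isoX mem_rotation.
Qed.

(** * Edge masks of diagonal graphs *)

(* A diagonal graph is encoded by the bits it assigns to [diag_edges]; [adj] reads the
   bit of a pair, and is [false] on non-diagonal pairs, whose [edge_index] is out of range. *)
Definition diag_edges : seq (V * V) :=
  [seq e : V * V <- [seq (u, v) | u <- vertices, v <- vertices] |
     (e.1.1 < e.2.1) && (e.1.2 != e.2.2)].
Arguments diag_edges : simpl never.

Lemma mem_diag_edges (e : V * V) : (e \in diag_edges) = (e.1.1 < e.2.1) && (e.1.2 != e.2.2).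
Proof. by case: e => u v; rewrite mem_filter allpairs_f ?mem_vertices ?andbT. Qed.

Definition edge_index (u v : V) : nat :=
  find (fun e => (e == (u, v)) || (e == (v, u))) diag_edges.

Lemma row_lt_diag (u v : V) : u.1 < v.1 -> u.2 != v.2 -> diag_pair u v.
Proof. by move=> lt ne; rewrite /diag_pair ne andbT; apply: contraTneq lt => ->; rewrite ltnn. Qed.

Lemma has_edge_index (u v : V) :
  has (fun e => (e == (u, v)) || (e == (v, u))) diag_edges = diag_pair u v.
Proof.
apply/hasP/idP => [[e] | /andP[rowNE colNE]].
  rewrite mem_diag_edges => /andP[lt ne] /orP[]/eqP eE; subst e; first exact: row_lt_diag.
  by rewrite diag_pairC; apply: row_lt_diag.
case: (ltngtP u.1 v.1) => [lt | gt | /val_inj eq]; last by rewrite eq eqxx in rowNE.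
  by exists (u, v); [rewrite mem_diag_edges lt | rewrite eqxx].
by exists (v, u); [rewrite mem_diag_edges gt eq_sym | rewrite eqxx orbT].
Qed.

Definition edge_mask (P : V -> V -> bool) : seq bool := [seq P e.1 e.2 | e <- diag_edges].

Definition adj (m : seq bool) (u v : V) : bool := nth false m (edge_index u v).

Lemma adjC (m : seq bool) (u v : V) : adj m u v = adj m v u.
Proof. by rewrite /adj /edge_index (eq_find (fun e => orbC _ _)). Qed.

Lemma adj_nondiag (m : seq bool) (u v : V) :
  size m = size diag_edges -> ~~ diag_pair u v -> adj m u v = false.
Proof.
move=> sz_m uvND; have idxE : edge_index u v = size diag_edges.
  by apply: hasNfind; rewrite has_edge_index.
rewrite /adj idxE nth_default // sz_m; exact: leqnn.
Qed.

Lemma adj_edge_mask (P : V -> V -> bool) (u v : V) :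
  (forall x y, P x y = P y x) -> (forall x y, P x y -> diag_pair x y) ->
  adj (edge_mask P) u v = P u v.
Proof.
move=> P_sym P_diag; have [uvD | uvND] := boolP (diag_pair u v).
- have idx_lt : edge_index u v < size diag_edges.
    by rewrite /edge_index -has_find has_edge_index.
  rewrite /adj (nth_map (u, v) _ _ idx_lt).
  have := nth_find (u, v) (etrans (has_edge_index u v) uvD).
  by case/orP=> /eqP->.
- rewrite (adj_nondiag (size_map _ _) uvND).
  by apply/esym/negbTE; apply: contra uvND; apply: P_diag.
Qed.

Definition mask_graph (m : seq bool) : graph := [set [set u; v] | u : V, v : V in adj m u].

Lemma mem_mask_graph (m : seq bool) (u v : V) :
  size m = size diag_edges -> ([set u; v] \in mask_graph m) = adj m u v.
Proof.
move=> sz_m; apply/imset2P/idP => [[x y _] | uvA]; last by exists u v; rewrite ?inE.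
move=> xyA; have {}xyA : adj m x y := xyA; move/eqP; have xyD : diag_pair x y.
  by apply: contraTT xyA => /(adj_nondiag sz_m)->.
by rewrite set2_eqE ?diag_pair_neq // => /orP[]/eqP[-> ->]; rewrite // adjC.
Qed.

Definition graph_mask (G : graph) : seq bool := edge_mask (fun u v => [set u; v] \in G).

Lemma adj_graph_mask (G : graph) (u v : V) :
  all_diagonal G -> adj (graph_mask G) u v = ([set u; v] \in G).
Proof.
move=> diagG; apply: adj_edge_mask => x y; first by rewrite setUC.
exact: mem_all_diagonal.
Qed.

Definition fun_of_seq (c : seq 'I_3) (i : 'I_3) : 'I_3 := nth i c i.

Lemma fun_of_seq_inj (c : seq 'I_3) : c \in permutations ord3 -> injective (fun_of_seq c).
Proof.
rewrite mem_permutations => c_perm i j.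
have sz_c : size c = 3 by rewrite (perm_size c_perm) size_map size_iota.
have c_uniq : uniq c by rewrite (perm_uniq c_perm).
rewrite /fun_of_seq (set_nth_default ord0 i) ?sz_c // (set_nth_default ord0 j) ?sz_c //.
by move/eqP; rewrite nth_uniq ?sz_c // => /eqP/val_inj.
Qed.

Definition piece_map (k : nat) (rows cols : seq 'I_3) (u : V) : V :=
  iter k unrot (fun_of_seq rows u.1, fun_of_seq cols u.2).

Definition piece_adj (n k : nat) (rows cols : seq 'I_3) (u v : V) : bool :=
  block_adj n (piece_map k rows cols u) (piece_map k rows cols v).

Definition piece_table : seq (seq bool) :=
  undup [seq edge_mask (piece_adj nk.1 nk.2 rc.1 rc.2)
          | nk <- [seq (n, k) | n <- iota 0 4, k <- iota 0 4],
            rc <- [seq (r, c) | r <- permutations ord3, c <- permutations ord3]].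

Lemma block_adj_diag (n : nat) (x y : V) : block_adj n x y -> diag_pair x y.
Proof.
have edges_diag : all (fun e => diag_pair e.1 e.2) (block_edges n).
  by case: n => [|[|[|n]]]; rewrite /block_edges /= ?nth_nil.
case/hasP=> [[a b]] /(allP edges_diag) eD /orP[]/eqP[-> ->] //.
by rewrite diag_pairC.
Qed.

Lemma diag_pair_unrot (x y : V) : diag_pair (unrot x) (unrot y) = diag_pair x y.
Proof. by rewrite /diag_pair /= (inj_eq rev_ord_inj) andbC. Qed.

Lemma piece_adj_diag (n k : nat) (rows cols : seq 'I_3) (u v : V) :
  piece_adj n k rows cols u v -> diag_pair u v.
Proof.
move/block_adj_diag; rewrite /piece_map; elim: k => [|k IH]; last first.
  by rewrite !iterS diag_pair_unrot.
by case/andP=> /= rowNE colNE; apply/andP; split;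
  [apply: contraNneq rowNE => -> | apply: contraNneq colNE => ->].
Qed.

Lemma piece_adjC (n k : nat) (rows cols : seq 'I_3) (u v : V) :
  piece_adj n k rows cols u v = piece_adj n k rows cols v u.
Proof. by rewrite /piece_adj -!mem_block setUC. Qed.

Lemma piece_tableP (m : seq bool) :
  m \in piece_table -> size m = size diag_edges /\ good_piece (mask_graph m).
Proof.
rewrite mem_undup => /allpairsP[[[n k] [r' s']] [_ /allpairsP[[r s] [/= rP sP [-> ->]]] ->]].
split; first exact: size_map.
exists (block n), k; split; first by apply/is_blockP; exists n.
exists (perm (fun_of_seq_inj rP)), (perm (fun_of_seq_inj sP)) => u v.
rewrite mem_mask_graph ?size_map // adj_edge_mask; last 2 first.
- exact: piece_adjC.
- exact: piece_adj_diag.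
by rewrite mem_rotation mem_block /loc_map !permE.
Qed.

Definition nbr_indices (u : V) : seq nat :=
  [seq edge_index u v | v <- vertices & diag_pair u v].

Definition ptrans_nbr_indices (u : V) : seq nat :=
  [seq edge_index (v.1, u.2) (u.1, v.2) | v <- vertices & diag_pair u v].

Definition degree_table : seq (seq nat * seq nat) :=
  [seq (nbr_indices u, ptrans_nbr_indices u) | u <- vertices].

Definition mask_balanced (T : seq (seq nat * seq nat)) (m : seq bool) : bool :=
  all (fun t => count (nth false m) t.1 == count (nth false m) t.2) T.

Lemma count_nbr_indices (m : seq bool) (u : V) :
  count (nth false m) (nbr_indices u) = count (fun v => diag_pair u v && adj m u v) vertices.
Proof. by rewrite count_map count_filter; apply: eq_count => v; rewrite /= andbC. Qed.

Lemma count_ptrans_nbr_indices (m : seq bool) (u : V) :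
  count (nth false m) (ptrans_nbr_indices u) =
  count (fun v => diag_pair u v && adj m (v.1, u.2) (u.1, v.2)) vertices.
Proof. by rewrite count_map count_filter; apply: eq_count => v; rewrite /= andbC. Qed.

Lemma mask_balanced_graph_mask (G : graph) : all_diagonal G -> degree_balanced G ->
  mask_balanced degree_table (graph_mask G).
Proof.
move=> diagG balG; apply/allP => _ /mapP[u _ ->].
have nbrE v : diag_pair u v && adj (graph_mask G) u v = ([set u; v] \in G).
  by rewrite adj_graph_mask //; apply/andb_idl/mem_all_diagonal.
have ptrans_nbrE v :
    diag_pair u v && adj (graph_mask G) (v.1, u.2) (u.1, v.2) = (ptrans_edge u v \in G).
  rewrite adj_graph_mask //; apply/andb_idl => /(mem_all_diagonal diagG).
  by rewrite /diag_pair /= eq_sym.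
by rewrite count_nbr_indices count_ptrans_nbr_indices (eq_count nbrE) (eq_count ptrans_nbrE)
  -!sum_vertices balG.
Qed.

(** * Exhaustive decomposition of balanced masks *)

Definition submask (p m : seq bool) : bool := all (fun b => b.1 ==> b.2) (zip p m).

Definition mask_minus (m p : seq bool) : seq bool := [seq b.1 && ~~ b.2 | b <- zip m p].

Fixpoint decompose (P : seq (seq bool)) (fuel : nat) (m : seq bool) :
    option (seq (seq bool)) :=
  if ~~ has id m then Some [::] else
  if fuel is fuel'.+1 then
    let k := find id m in
    let fix try_pieces Q :=
      if Q is p :: Q' then
        if nth false p k && submask p m then
          if decompose P fuel' (mask_minus m p) is Some L then Some (p :: L)
          else try_pieces Q'
        else try_pieces Q'
      else None in
    try_pieces P
  else None.

Definition exact_mask_cover (m : seq bool) (L : seq (seq bool)) : bool :=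
  all (fun k => count (fun p => nth false p k) L == nth false m k) (iota 0 (size m)).

Definition decomposable (P : seq (seq bool)) (m : seq bool) : bool :=
  if decompose P (size m) m is Some L then all (fun p => p \in P) L && exact_mask_cover m L
  else false.

Lemma decomposableP (P : seq (seq bool)) (m : seq bool) :
  decomposable P m -> exists2 L, all (fun p => p \in P) L & exact_mask_cover m L.
Proof. by rewrite /decomposable; case: decompose => // L /andP[]; exists L. Qed.

Fixpoint all_bitseqs_from (n : nat) (acc : seq bool) (P : pred (seq bool)) : bool :=
  if n is n'.+1 then all_bitseqs_from n' (true :: acc) P && all_bitseqs_from n' (false :: acc) P
  else P acc.

Lemma all_bitseqs_fromP (n : nat) (acc : seq bool) (P : pred (seq bool)) :
  all_bitseqs_from n acc P -> forall b, size b = n -> P (b ++ acc).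
Proof.
elim: n acc => [|n IH] acc /=; first by move=> Pacc [].
case/andP=> allT allF b; case/lastP: b => [|b x] //; rewrite size_rcons => -[sz_b].
by rewrite cat_rcons; case: x; [apply: IH allT _ sz_b | apply: IH allF _ sz_b].
Qed.

(* The tables are let-bound so that the VM computes them only once. *)
Definition balanced_masks_decompose : bool :=
  let T := degree_table in
  let P := piece_table in
  all_bitseqs_from (size diag_edges) [::]
    (fun m => if mask_balanced T m then decomposable P m else true).

Lemma balanced_masks_decomposeT : balanced_masks_decompose.
Proof. by vm_compute. Qed.

Lemma balanced_mask_decomposes (m : seq bool) :
  size m = size diag_edges -> mask_balanced degree_table m ->
  exists2 L, all (fun p => p \in piece_table) L & exact_mask_cover m L.
Proof.
move=> sz_m m_bal; apply: decomposableP.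
by have := all_bitseqs_fromP balanced_masks_decomposeT sz_m; rewrite cats0 m_bal.
Qed.

Lemma sum_nth_count (T : Type) (x0 : T) (s : seq T) (P : pred T) :
  \sum_(i < size s) (P (nth x0 s i) : nat) = count P s.
Proof.
rewrite -(big_mkord xpredT (fun i => P (nth x0 s i) : nat)).
rewrite -(big_nth x0 xpredT (fun x => P x : nat)).
by elim: s => [|x s IH]; rewrite ?big_nil // big_cons IH.
Qed.

Lemma exact_cover_mask_graphs (G : graph) (L : seq (seq bool)) :
  all_diagonal G -> all (fun p => p \in piece_table) L -> exact_mask_cover (graph_mask G) L ->
  exact_cover G (fun i : 'I_(size L) => mask_graph (nth [::] L i)).
Proof.
move=> diagG /allP L_pieces /allP L_cover.
have sz_L p : p \in L -> size p = size diag_edges by move/L_pieces/piece_tableP => [].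
have count_adj u v : count (fun p => adj p u v) L = adj (graph_mask G) u v.
  have [uvD | uvND] := boolP (diag_pair u v); last first.
    rewrite (adj_nondiag (size_map _ _) uvND); apply/eqP; rewrite eqn0Ngt -has_count.
    by apply/hasPn => p pL; rewrite adj_nondiag ?sz_L.
  apply/eqP/L_cover; rewrite mem_iota size_map add0n.
  by rewrite /edge_index -has_find has_edge_index.
move=> e; case: (pickP (fun uv : V * V => e == [set uv.1; uv.2])) => [[u v] /eqP-> | not_edge].
  rewrite -adj_graph_mask // -count_adj.
  rewrite (sum_nth_count [::] L (fun p => [set u; v] \in mask_graph p)).
  by apply: eq_in_count => p pL; rewrite /= mem_mask_graph ?sz_L.
have notin (H : graph) : (forall f, f \in H -> exists x y, f = [set x; y]) -> e \in H = false.
  by move=> H_edges; apply/negP => /H_edges[x [y eE]]; move: (not_edge (x, y)); rewrite eE eqxx.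
rewrite big1 => [|i _]; last by rewrite notin // => f /imset2P[x y _ _ ->]; exists x, y.
by rewrite notin // => f /diagG[x [y [-> _]]]; exists x, y.
Qed.

Theorem mainTheorem15 (G : graph) :
  simple_graph G -> all_diagonal G ->
  (degree_criterion G <->
   exists (n : nat) (X : 'I_n -> graph),
     (forall i, good_piece (X i)) /\
     (forall i j, i != j -> [disjoint X i & X j]) /\
     \bigcup_(i < n) X i = G).
Proof.
move=> _ diagG; split=> [/(degree_criterion_balanced diagG) G_bal | [n [X [X_pieces X_cover]]]].
- have [L L_pieces L_cover] :=
    balanced_mask_decomposes (size_map _ _) (mask_balanced_graph_mask diagG G_bal).
  exists (size L), (fun i => mask_graph (nth [::] L i)); split.
    by move=> i; apply: (piece_tableP (allP L_pieces _ (mem_nth [::] (ltn_ord i)))).2.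
  exact/exact_coverP/exact_cover_mask_graphs.
- apply/(degree_criterion_balanced diagG)/(balanced_exact_cover (X := X)).
    exact/exact_coverP.
  by move=> i; apply: good_piece_balanced.
Qed.
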